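(* Let $X_1,X_2,\dots$ be real random variables on a probability space with $\mathbb E X_n=0$, and suppose there are constants $M<\infty$, $C<\infty$ and $0\le\gamma<2$ such that $\|X_n\|_\infty\le M$ and $\operatorname{Var}\big(\sum_{k=1}^nX_k\big)\le Cn^\gamma$ for all $n$. Then for every $\eta>\frac{\gamma+1}{3}$, $\sum_{k=1}^nX_k=O(n^\eta)$ almost surely.
   Context: No independence is assumed among the $X_n$. *)

From HB Require Import structures.
From mathcomp Require Import all_boot all_order all_algebra.
From mathcomp Require Import all_classical all_reals all_analysis.
From mathcomp Require Import probability.

From HB Require Import structures.
From mathcomp Require Import all_boot all_order all_algebra.
From mathcomp Require Import all_classical all_reals all_analysis.
From mathcomp Require Import probability.
From mathcomp Require Import zify ring lra measurable_realfun.
Import Order.TTheory GRing.Theory Num.Theory.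
Import numFieldNormedType.Exports.
Local Open Scope classical_set_scope.
Local Open Scope ring_scope.

(* Choose integers 0 < p <= q with (gamma + 1) / 3 < p / q < min(eta, 1).  At
   level k look at the grid points m 2^(pk), m < 2^(q+(q-p)k); they cover
   [0, 2^(q(k+1))).  As E S_n = 0, E S_n^2 = Var S_n <= C n^gamma, so the
   expectation of  sum_k sum_m S_(m 2^(pk))^2 / 2^(2pk)  is dominated by a
   geometric series of ratio 2^(q(1+gamma)-3p) < 1.  Hence this double series
   is a.s. finite, say equal to B^2, and then |S_(m 2^(pk))| <= B 2^(pk) on the
   whole grid.  Every n in [2^(qk), 2^(q(k+1))) is within one block
   2^(pk) <= n^(p/q) <= n^eta of a grid point of level k, and the increments
   are bounded by M, so S_n = O(n^eta). *)

Lemma exists_ratio_between {R : realType} (a b : R) : 0 <= a -> a < b ->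
  exists p q : nat, [/\ (0 < q)%N, a * q%:R < p%:R & p%:R < b * q%:R].
Proof.
move=> a0 ab; set q := (Num.truncn ((b - a)^-1)).+1.
have ba0 : 0 < b - a by rewrite subr_gt0.
have qba : 1 < (b - a) * q%:R.
  have bq : (b - a)^-1 < q%:R := truncnS_gt _.
  by rewrite -(ltr_pM2l ba0) mulfV ?gt_eqF in bq.
set p := (Num.truncn (a * q%:R)).+1.
have ap : a * q%:R < p%:R := truncnS_gt _.
have pa : p%:R <= a * q%:R + 1.
  by rewrite /p -addn1 natrD lerD2r truncn_le mulr_ge0.
by exists p, q; split => //; rewrite mulrBl in qba; lra.
Qed.

Lemma powR_lt1 {R : realType} (a e : R) : 1 < a -> e < 0 -> a `^ e < 1.
Proof.
move=> a1 e0; rewrite /powR gt_eqF ?(lt_trans ltr01) // expR_lt1.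
by rewrite pmulr_llt0 // ln_gt0.
Qed.

Lemma norm_le_sqrt_of_sqr_div {R : rcfType} (s K D : R) :
  0 < D -> s ^+ 2 / D ^+ 2 <= K -> `|s| <= Num.sqrt K * D.
Proof.
move=> D0; rewrite ler_pdivrMr ?exprn_gt0 // => sK.
have K0 : 0 <= K by have := le_trans (sqr_ge0 s) sK; rewrite pmulr_lge0 ?exprn_gt0.
rewrite -sqrtr_sqr -[X in _ * X](gtr0_norm D0) -sqrtr_sqr -sqrtrM //.
by rewrite ler_sqrt // mulr_ge0 // sqr_ge0.
Qed.

Lemma nneseries_geometric_le {R : realType} (A r : R) :
  0 <= A -> 0 < r -> r < 1 ->
  (\sum_(0 <= k <oo) (A * r ^+ k)%:E <= (A / (1 - r))%:E)%E.
Proof.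
move=> A0 r0 r1; apply: lime_le.
  by apply: is_cvg_nneseries => n _ _; rewrite lee_fin mulr_ge0 // exprn_ge0 // ltW.
apply: nearW => n; rewrite sumEFin lee_fin.
by have := @geometric_le_lim R n A r A0 r0; rewrite ger0_norm ?(ltW r0) // => /(_ r1).
Qed.

Lemma lee_sum_nat_term {R : realType} {f : nat -> \bar R} {m n : nat} :
  (forall i, 0 <= f i)%E -> (m < n)%N -> (f m <= \sum_(0 <= i < n) f i)%E.
Proof.
move=> f0 mn.
apply: le_trans (@lee_sum_nneg_natr R f xpredT 0%N (fun i _ _ => f0 i) m.+1 n mn).
by rewrite big_nat_recr //= leeDr // sume_ge0.
Qed.

Lemma lee_nneseries_term {R : realType} {f : nat -> \bar R} (m : nat) :
  (forall i, 0 <= f i)%E -> (f m <= \sum_(0 <= i <oo) f i)%E.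
Proof.
move=> f0; apply: (le_trans (lee_sum_nat_term f0 (ltnSn m))).
exact: nneseries_lim_ge.
Qed.

Lemma norm_sum_nat_le {R : realType} {x : nat -> R} {M : R} {a b : nat} :
  (forall j, (a <= j)%N -> `|x j| <= M) ->
  `|\sum_(a <= j < b) x j| <= M * (b - a)%:R.
Proof.
move=> xM; apply: le_trans (ler_norm_sum _ _ _) _.
rewrite mulr_natr -sumr_const_nat; apply: ler_sum_nat => j /andP[aj _].
exact: xM.
Qed.

Definition partial_sum {R : realType} (x : nat -> R) (n : nat) : R :=
  \sum_(1 <= j < n.+1) x j.

Lemma partial_sum0 {R : realType} (x : nat -> R) : partial_sum x 0 = 0.
Proof. by rewrite /partial_sum big_geq. Qed.

Lemma partial_sumS {R : realType} (x : nat -> R) n :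
  partial_sum x n.+1 = partial_sum x n + x n.+1.
Proof. by rewrite /partial_sum big_nat_recr. Qed.

(* Level k of the grid consists of the block_count p q k multiples of
   block_len p k below 2^(q(k+1)); it is only used with p <= q. *)
Definition block_len (p k : nat) : nat := 2 ^ (p * k).
Definition block_count (p q k : nat) : nat := 2 ^ (q + (q - p) * k).

Lemma block_len_gt0 p k : (0 < block_len p k)%N.
Proof. exact: expn_gt0. Qed.

Lemma block_count_mul_len p q k : (p <= q)%N ->
  (block_count p q k * block_len p k = 2 ^ (q * k.+1))%N.
Proof.
move=> pq; rewrite -expnD; congr (2 ^ _)%N.
have : (p * k <= q * k)%N by rewrite leq_mul2r pq orbT.
rewrite mulnBl mulnS; lia.
Qed.

Lemma near_grid_point {p q n : nat} : (0 < q)%N -> (p <= q)%N -> (0 < n)%N ->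
  exists k m, [/\ (2 ^ (q * k) <= n)%N, (m < block_count p q k)%N &
    (m * block_len p k <= n < m.+1 * block_len p k)%N].
Proof.
move=> q0 pq n0; have q1 : (1 < 2 ^ q)%N by rewrite -{1}(expn0 2) ltn_exp2l.
set k := trunc_log (2 ^ q) n; exists k, (n %/ block_len p k)%N.
have d0 := block_len_gt0 p k.
have nm : (n < (n %/ block_len p k).+1 * block_len p k)%N by exact: ltn_ceil.
split; first by rewrite expnM; exact: trunc_logP.
- rewrite -(ltn_pmul2r d0) block_count_mul_len //.
  apply: leq_ltn_trans (leq_divM _ _) _.
  by rewrite expnM; exact: trunc_log_ltn.
- by rewrite leq_divM nm.
Qed.

Lemma block_len_le_powR {R : realType} (eta : R) (p q k n : nat) :
  0 <= eta -> p%:R <= q%:R * eta -> (2 ^ (q * k) <= n)%N ->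
  (block_len p k)%:R <= n%:R `^ eta.
Proof.
move=> eta0 peta kn; rewrite /block_len natrX -powR_mulrn //.
apply: (@le_trans _ _ (2 `^ ((q * k)%:R * eta))).
  apply: ler_powR; first lra.
  by rewrite !natrM mulrAC; apply: ler_wpM2r.
rewrite powRrM powR_mulrn // -natrX.
by apply: ge0_ler_powR => //; rewrite ?nnegrE ?ler_nat.
Qed.

Lemma block_moment_eq {R : realType} (gamma : R) (p q k : nat) : (p <= q)%N ->
  (block_count p q k)%:R * (block_count p q k * block_len p k)%N%:R `^ gamma
    / (block_len p k)%:R ^+ 2
  = 2 `^ (q%:R * (1 + gamma)) * (2 `^ (q%:R * (1 + gamma) - 3 * p%:R)) ^+ k.
Proof.
move=> pq; have p2 n : ((2 ^ n)%N%:R : R) = 2 `^ n%:R by rewrite natrX powR_mulrn.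
have p2X (x : R) n : (2 `^ x) ^+ n = 2 `^ (x * n%:R).
  by rewrite -powR_mulrn ?powR_ge0 // -powRrM.
have p2D (x y : R) : 2 `^ x * 2 `^ y = 2 `^ (x + y).
  by rewrite powRD // pnatr_eq0 implybT.
rewrite block_count_mul_len // /block_count /block_len !p2 -powRrM !p2X -powRN.
rewrite !p2D; congr (2 `^ _); rewrite !natrD !natrM natrB //; ring.
Qed.

Lemma exists_grid_exponents {R : realType} {gamma eta : R} :
  0 <= gamma -> gamma < 2 -> (gamma + 1) / 3 < eta ->
  exists p q : nat, [/\ (0 < q)%N, (p <= q)%N, p%:R <= q%:R * eta
    & q%:R * (1 + gamma) < 3 * p%:R].
Proof.
move=> g0 g2 eta_gt.
have [p [q [q0 gp pe]]] : exists p q : nat,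
    [/\ (0 < q)%N, (gamma + 1) / 3 * q%:R < p%:R & p%:R < Num.min eta 1 * q%:R].
  by apply: exists_ratio_between; [lra | rewrite lt_min eta_gt /=; lra].
have qR : 0 < q%:R :> R by rewrite ltr0n.
have min_le1 : Num.min eta 1 <= 1 by rewrite ge_min lexx orbT.
have min_le_eta : Num.min eta 1 <= eta by rewrite ge_min lexx.
exists p, q; split => //.
- rewrite -(ler_nat R); apply/ltW/(lt_le_trans pe).
  by rewrite ler_piMl // ltW.
- by apply/ltW/(lt_le_trans pe); rewrite mulrC ler_wpM2l // ltW.
- by move: gp; rewrite mulrAC ltr_pdivrMr //; lra.
Qed.

Lemma partial_sum_bigO_of_grid_bound {R : realType} {x : nat -> R}
    {M B eta : R} {p q : nat} :
  (0 < q)%N -> (p <= q)%N -> 0 <= eta -> p%:R <= q%:R * eta ->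
  (forall j, (1 <= j)%N -> `|x j| <= M) ->
  (forall k m, (m < block_count p q k)%N ->
     `|partial_sum x (m * block_len p k)| <= B * (block_len p k)%:R) ->
  partial_sum x =O_\oo (fun n : nat => n%:R `^ eta).
Proof.
move=> q0 pq eta0 peta xM grid.
have M0 : 0 <= M := le_trans (normr_ge0 _) (xM 1%N isT).
have B0 : 0 <= B.
  (* the grid point 0 carries the empty sum *)
  have := grid 0%N 0%N (expn_gt0 _ _).
  rewrite mul0n /partial_sum big_geq // normr0 pmulr_lge0 //.
  by rewrite ltr0n block_len_gt0.
apply/eqO_exP; exists (B + M + 1); first by rewrite ltr_pwDr // addr_ge0.
near=> n; have n0 : (0 < n)%N by near: n; exists 1%N.
have [k [m [kn mc /andP[mn nm]]]] := near_grid_point q0 pq n0.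
set D := block_len p k; set g := (m * D)%N.
have tail : `|\sum_(g.+1 <= j < n.+1) x j| <= M * D%:R.
  have xM' j : (g.+1 <= j)%N -> `|x j| <= M by move=> gj; exact/xM/(leq_trans _ gj).
  apply: le_trans (norm_sum_nat_le (b := n.+1) xM') _.
  by apply: ler_wpM2l => //; rewrite ler_nat; move: nm; rewrite mulSn; lia.
rewrite [X in _ <= _ * X]ger0_norm ?powR_ge0 // /partial_sum.
rewrite (big_cat_nat _ (n := g.+1)) //=.
apply: le_trans (ler_normD _ _) _; apply: le_trans (lerD (grid k m mc) tail) _.
rewrite -mulrDl; apply: le_trans (_ : (B + M) * n%:R `^ eta <= _).
  by apply: ler_wpM2l; [exact: addr_ge0 | exact: block_len_le_powR kn].
by rewrite [leRHS]mulrDl mul1r lerDl powR_ge0.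
Unshelve. all: by end_near. Qed.

Definition grid_term {R : realType} (x : nat -> R) (p k m : nat) : R :=
  partial_sum x (m * block_len p k) ^+ 2 / (block_len p k)%:R ^+ 2.

Definition grid_level {R : realType} (x : nat -> R) (p q k : nat) : \bar R :=
  (\sum_(0 <= m < block_count p q k) (grid_term x p k m)%:E)%E.

Definition grid_series {R : realType} (x : nat -> R) (p q : nat) : \bar R :=
  (\sum_(0 <= k <oo) grid_level x p q k)%E.

Lemma grid_term_ge0 {R : realType} (x : nat -> R) p k m : 0 <= grid_term x p k m.
Proof. by rewrite divr_ge0 ?sqr_ge0. Qed.

Lemma grid_level_ge0 {R : realType} (x : nat -> R) p q k : (0 <= grid_level x p q k)%E.
Proof. by rewrite sume_ge0 // => m _; rewrite lee_fin grid_term_ge0. Qed.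

Lemma grid_series_ge0 {R : realType} (x : nat -> R) p q : (0 <= grid_series x p q)%E.
Proof. by apply: nneseries_ge0 => k _ _; exact: grid_level_ge0. Qed.

Lemma grid_bound_of_fin_series {R : realType} {x : nat -> R} {p q : nat} :
  grid_series x p q \is a fin_num ->
  forall k m, (m < block_count p q k)%N ->
    `|partial_sum x (m * block_len p k)|
      <= Num.sqrt (fine (grid_series x p q)) * (block_len p k)%:R.
Proof.
move=> fin k m mk; apply: norm_le_sqrt_of_sqr_div; first by rewrite ltr0n block_len_gt0.
rewrite -lee_fin fineK //.
have term0 i : (0 <= (grid_term x p k i)%:E)%E by rewrite lee_fin grid_term_ge0.
apply: le_trans (@lee_sum_nat_term _ (fun i => (grid_term x p k i)%:E) _ _ term0 mk) _.
exact: (lee_nneseries_term k (grid_level_ge0 x p q)).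
Qed.

Lemma bounded_ae_integrable {d} {T : measurableType d} {R : realType}
    {P : probability T R} {f : T -> R} {M : R} :
  measurable_fun setT f -> {ae P, forall w, `|f w| <= M} ->
  P.-integrable setT (EFin \o f).
Proof.
move=> mf fM; apply/integrableP; split; first exact/measurable_EFinP.
apply: (@le_lt_trans _ _ (`|M|%:E * P setT)%E); last first.
  by rewrite probability_setT mule1 ltry.
apply: integral_le_bound => //; first exact/measurable_EFinP.
by apply: filterS fM => w wM _; rewrite /= lee_fin (le_trans wM) // ler_norm.
Qed.

Lemma variance_mean0 {d} {T : measurableType d} {R : realType}
    (P : probability T R) (f : T -> R) :
  ('E_P[f] = 0 -> 'V_P[f] = 'E_P[f ^+ 2])%E.
Proof.
move=> Ef0; rewrite /variance covariance.unlock Ef0 /=.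
congr expectation; apply/funext => w.
by rewrite !fctE expr2; congr (_ * _); exact: subr0.
Qed.

Section partial_sum_moments.
Context {d : measure_display} {T : measurableType d} {R : realType}.
Context {P : probability T R} {X : nat -> {RV P >-> R}} {M C gamma : R}.
Hypothesis EX0 : forall n, (1 <= n)%N -> ('E_P[X n] = 0)%E.
Hypothesis X_bounded : forall n, (1 <= n)%N -> {ae P, forall w, `|X n w| <= M}.
Hypothesis var_partial_sum_le : forall n, (1 <= n)%N ->
  ('V_P[fun w => partial_sum (X ^~ w) n] <= (C * n%:R `^ gamma)%:E)%E.

Lemma measurable_partial_sum n : measurable_fun setT (fun w => partial_sum (X ^~ w) n).
Proof. by apply: measurable_sum => i; exact: measurable_funPT. Qed.

Lemma integrable_partial_sum n :
  P.-integrable setT (EFin \o (fun w => partial_sum (X ^~ w) n)).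
Proof.
elim: n => [|n IHn].
  by apply: eq_integrable (integrable0 P _) => // w _; rewrite /= partial_sum0.
have intX := bounded_ae_integrable (measurable_funPT (X n.+1)) (X_bounded n.+1 isT).
by apply: eq_integrable (integrableD _ IHn intX) => // w _; rewrite /= partial_sumS.
Qed.

Lemma expectation_partial_sum n : ('E_P[fun w => partial_sum (X ^~ w) n] = 0)%E.
Proof.
elim: n => [|n IHn].
  rewrite expectation.unlock.
  by under eq_integral do rewrite partial_sum0; rewrite integral0.
have intX := bounded_ae_integrable (measurable_funPT (X n.+1)) (X_bounded n.+1 isT).
move: IHn (EX0 n.+1 isT); rewrite !expectation.unlock => ES EX.
under eq_integral do rewrite partial_sumS.
by rewrite (integralD_EFin _ (integrable_partial_sum n) intX) //= ES EX adde0.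
Qed.

Lemma second_moment_partial_sum n :
  (\int[P]_w ((partial_sum (X ^~ w) n) ^+ 2)%:E <= (`|C| * n%:R `^ gamma)%:E)%E.
Proof.
case: n => [|n].
  under eq_integral do rewrite partial_sum0 expr0n.
  by rewrite integral0 lee_fin mulr_ge0 ?powR_ge0.
have := var_partial_sum_le n.+1 isT.
rewrite variance_mean0 ?expectation_partial_sum // expectation.unlock.
move/le_trans; apply; rewrite lee_fin.
by rewrite ler_wpM2r ?powR_ge0 ?ler_norm.
Qed.

Lemma measurable_grid_term p k m :
  measurable_fun setT (fun w => (grid_term (X ^~ w) p k m)%:E).
Proof.
apply/measurable_EFinP; apply: measurable_funM; last exact: measurable_cst.
by apply: measurable_funX; exact: measurable_partial_sum.
Qed.

Lemma measurable_grid_level p q k :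
  measurable_fun setT (fun w => grid_level (X ^~ w) p q k).
Proof. by apply: emeasurable_sum => m; exact: measurable_grid_term. Qed.

Lemma integral_grid_term_le p k m :
  (\int[P]_w (grid_term (X ^~ w) p k m)%:E
    <= (`|C| * (m * block_len p k)%N%:R `^ gamma / (block_len p k)%:R ^+ 2)%:E)%E.
Proof.
under eq_integral do rewrite EFinM muleC.
rewrite ge0_integralZl //; last 2 first.
- apply/measurable_EFinP; apply: measurable_funX; exact: measurable_partial_sum.
- by move=> w _; rewrite lee_fin sqr_ge0.
rewrite [leRHS]EFinM muleC lee_pmul //; last exact: second_moment_partial_sum.
by apply: integral_ge0 => w _; rewrite lee_fin sqr_ge0.
Qed.

Hypothesis gamma_ge0 : 0 <= gamma.

Lemma integral_grid_level_le p q k : (p <= q)%N ->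
  (\int[P]_w grid_level (X ^~ w) p q k
    <= (`|C| * 2 `^ (q%:R * (1 + gamma))
        * (2 `^ (q%:R * (1 + gamma) - 3 * p%:R)) ^+ k)%:E)%E.
Proof.
move=> pq; rewrite ge0_integral_sum //; last 2 first.
- by move=> m; exact: measurable_grid_term.
- by move=> m w _; rewrite lee_fin grid_term_ge0.
rewrite -mulrA -(block_moment_eq gamma p q k pq).
set B := _ `^ gamma; set D := (block_len p k)%:R.
rewrite (_ : _ * _ = \sum_(0 <= m < block_count p q k) (`|C| * B / D ^+ 2)); last first.
  by rewrite sumr_const_nat subn0 -mulr_natl; ring.
rewrite -sumEFin big_nat_cond [leRHS]big_nat_cond.
apply: lee_sum => m /andP[/andP[_ mk] _].
apply: le_trans (integral_grid_term_le p k m) _.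
rewrite lee_fin ler_wpM2r ?invr_ge0 ?exprn_ge0 // ler_wpM2l //.
apply: ge0_ler_powR => //; rewrite ?nnegrE ?ler0n // ler_nat leq_mul2r.
by rewrite ltnW ?orbT.
Qed.

Lemma integrable_grid_series p q : (p <= q)%N -> q%:R * (1 + gamma) < 3 * p%:R ->
  P.-integrable setT (fun w => grid_series (X ^~ w) p q).
Proof.
move=> pq qp; apply/integrableP; split.
  apply: ge0_emeasurable_sum => k *.
  - exact: grid_level_ge0.
  - exact: measurable_grid_level.
rewrite (eq_integral (fun w => grid_series (X ^~ w) p q)); last first.
  by move=> w _; rewrite gee0_abs // grid_series_ge0.
rewrite integral_nneseries //; last 2 first.
- by move=> k; exact: measurable_grid_level.
- by move=> k w _; exact: grid_level_ge0.
set r := 2 `^ (q%:R * (1 + gamma) - 3 * p%:R).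
apply: le_lt_trans (lee_nneseries _ (fun k _ => integral_grid_level_le p q k pq)) _.
  by move=> k _ _; apply: integral_ge0 => w _; exact: grid_level_ge0.
have A0 : 0 <= `|C| * 2 `^ (q%:R * (1 + gamma)) by rewrite mulr_ge0 ?powR_ge0.
have r0 : 0 < r by exact: powR_gt0.
have r1 : r < 1 by apply: powR_lt1; [rewrite ltr1n | lra].
exact: le_lt_trans (nneseries_geometric_le _ _ A0 r0 r1) (ltry _).
Qed.

End partial_sum_moments.

Theorem mainTheorem8 (d : measure_display) (T : measurableType d) (R : realType)
  (P : probability T R) (X : nat -> {RV P >-> R}) (M C gamma : R) :
  0 <= gamma -> gamma < 2 ->
  (forall n, (1 <= n)%N -> ('E_P[X n] = 0)%E) ->
  (forall n, (1 <= n)%N -> {ae P, forall w, `|X n w| <= M}) ->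
  (forall n, (1 <= n)%N ->
     ('V_P[fun w => (\sum_(1 <= k < n.+1) X k w)%R] <= (C * n%:R `^ gamma)%:E)%E) ->
  forall eta : R, (gamma + 1) / 3 < eta ->
  {ae P, forall w,
     (fun n : nat => \sum_(1 <= k < n.+1) X k w) =O_\oo (fun n : nat => n%:R `^ eta)}.
Proof.
move=> g0 g2 EX0 X_bounded var_le eta eta_gt.
have [p [q [q0 pq p_eta qp]]] := exists_grid_exponents g0 g2 eta_gt.
have X_bounded_all : {ae P, forall w n, (1 <= n)%N -> `|X n w| <= M}.
  apply: ae_foralln => -[|n]; first exact: nearW.
  by apply: filterS (X_bounded n.+1 isT) => w.
have := integrable_grid_series EX0 X_bounded var_le g0 p q pq qp.
move/(integrable_ae measurableT).
apply: filterS2 X_bounded_all => w Xw /(_ I) fin_w.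
have eta0 : 0 <= eta by lra.
have := partial_sum_bigO_of_grid_bound q0 pq eta0 p_eta Xw
  (grid_bound_of_fin_series fin_w).
by rewrite /partial_sum.
Qed.
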